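(* Let $\psi$ be any real-valued function of $r$ and $\varphi(s,r)=s+\psi(r)$. Fix $r>0$ and for $s>-\psi(r)$ put $$f(s,r)=\dfrac{1}{2\varphi(s,r)+2\,\mathop{K}\limits_{n=1}^{\infty}\left(\dfrac{n^2r^2}{\varphi(s,r)}\right)}.$$ Then $f(\cdot,r)$ is the unique solution of the functional equation $$f(s,r)+f(s+2r,r)=\frac{1}{\varphi(s,r)+r}\qquad(s>-\psi(r))$$ satisfying $\lim_{s\to\infty}f(s,r)=0$.
   Context: $\mathop{K}_{n=1}^{\infty}\left(\frac{a_n}{b}\right)$ denotes the continued fraction $\cfrac{a_1}{b+\cfrac{a_2}{b+\cdots}}$ (limit of convergents). *)

From Stdlib Require Import Reals.
From Coquelicot Require Import Coquelicot.
Open Scope R_scope.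

Fixpoint cf_from (a : nat -> R) (b : R) (k n : nat) : R :=
  match n with
  | O => 0
  | S n' => a k / (b + cf_from a b (S k) n')
  end.

(* N-th convergent of K_{n=1}^oo (a_n / b) = a_1/(b + a_2/(b + ... + a_N/b)) *)
Definition cf_convergent (a : nat -> R) (b : R) (N : nat) : R :=
  cf_from a b 1 N.

Definition cf_converges_to (a : nat -> R) (b : R) (v : R) : Prop :=
  is_lim_seq (cf_convergent a b) v.

From Stdlib Require Import Reals Lra Lia.
From Coquelicot Require Import Coquelicot.
Open Scope R_scope.

(* The value of the continued fraction is a Laplace transform.  For x > 0 let
   J_k(x) = int_0^oo e^(-xt) tanh(rt)^k sech(rt) dt.  Integration by parts gives
   x J_k + r (k+1) J_(k+1) = r k J_(k-1) + [k = 0], so t_k = r k J_k / J_(k-1) is a positive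
   tail sequence of K(n^2 r^2 / x) with t_1 = 1/J_0(x) - x, and f(s) = J_0(phi s) / 2.
   A continued fraction with nonnegative partial numerators converges to the value of a
   nonnegative tail sequence as soon as the bound P_(n+1) / (B_(n+1) B_n) coming from the
   determinant formula tends to 0; for a_n = n^2 r^2 its reciprocal grows like log n.
   From sech(rt) (e^(-xt) + e^(-(x+2r)t)) = 2 e^(-(x+r)t) the function J_0 satisfies the
   functional equation, J_0(x) <= 1/x gives the limit, and the difference of two solutions
   has a 2r-periodic absolute value tending to 0, hence vanishes. *)

Fixpoint cf_tail (a : nat -> R) (b : R) (k n : nat) (w : R) : R :=
  match n with
  | O => w
  | S n' => a k / (b + cf_tail a b (S k) n' w)
  end.

Section ContinuedFraction.
Variables (a : nat -> R) (b : R).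
Hypothesis b_pos : 0 < b.
Hypothesis a_ge0 : forall n, 0 <= a n.

Lemma cf_from_tail k n : cf_from a b k n = cf_tail a b k n 0.
Proof. revert k; induction n as [|n IH]; intros k; simpl; rewrite ?IH; reflexivity. Qed.

Lemma cf_tail_snoc k n w :
  cf_tail a b k (S n) w = cf_tail a b k n (a (k + n)%nat / (b + w)).
Proof.
  revert k; induction n as [|n IH]; intros k.
  - simpl. rewrite Nat.add_0_r. reflexivity.
  - change (cf_tail a b k (S (S n)) w) with (a k / (b + cf_tail a b (S k) (S n) w)).
    rewrite IH. simpl. rewrite <- plus_n_Sm. reflexivity.
Qed.

Lemma cf_tail_split (t : nat -> R) :
  (forall k, (1 <= k)%nat -> t k = a k / (b + t (S k))) ->
  forall n k, (1 <= k)%nat -> t k = cf_tail a b k n (t (k + n)%nat).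
Proof.
  intros Ht n. induction n as [|n IH]; intros k Hk; simpl.
  - rewrite Nat.add_0_r. reflexivity.
  - rewrite Ht, (IH (S k)) by lia. rewrite <- plus_n_Sm. reflexivity.
Qed.

Fixpoint cf_numer (n : nat) : R :=
  match n with
  | 0 => 0
  | S m => match m with 0 => a 1%nat | S p => b * cf_numer m + a n * cf_numer p end
  end.

Fixpoint cf_denom (n : nat) : R :=
  match n with
  | 0 => 1
  | S m => match m with 0 => b | S p => b * cf_denom m + a n * cf_denom p end
  end.

Fixpoint cf_prod (n : nat) : R :=
  match n with 0 => 1 | S m => a n * cf_prod m end.

Lemma cf_numer_SS n : cf_numer (S (S n)) = b * cf_numer (S n) + a (S (S n)) * cf_numer n.
Proof. reflexivity. Qed.

Lemma cf_denom_SS n : cf_denom (S (S n)) = b * cf_denom (S n) + a (S (S n)) * cf_denom n.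
Proof. reflexivity. Qed.

Lemma cf_denom_pos n : 0 < cf_denom n.
Proof.
  enough (H : 0 < cf_denom n /\ 0 < cf_denom (S n)) by apply H.
  induction n as [|n [IH1 IH2]]; [simpl; lra|].
  split; [exact IH2|]. rewrite cf_denom_SS. pose proof (a_ge0 (S (S n))). nra.
Qed.

Lemma cf_prod_ge0 n : 0 <= cf_prod n.
Proof. induction n; simpl; [lra | apply Rmult_le_pos; auto]. Qed.

Lemma cf_det n :
  cf_numer (S n) * cf_denom n - cf_numer n * cf_denom (S n) = (-1) ^ n * cf_prod (S n).
Proof.
  induction n as [|n IH]; [simpl; ring|].
  rewrite cf_numer_SS, cf_denom_SS. change (cf_prod (S (S n))) with (a (S (S n)) * cf_prod (S n)).
  replace ((-1) ^ S n * (a (S (S n)) * cf_prod (S n)))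
    with (- a (S (S n)) * ((-1) ^ n * cf_prod (S n))) by (simpl; ring).
  rewrite <- IH. ring.
Qed.

Lemma cf_tail_moebius n w : 0 <= w ->
  cf_tail a b 1 (S n) w
  = (cf_numer (S n) + w * cf_numer n) / (cf_denom (S n) + w * cf_denom n).
Proof.
  revert w; induction n as [|n IH]; intros w Hw.
  - simpl. field. lra.
  - assert (Hw' : 0 <= a (S (S n)) / (b + w)) by (apply Rdiv_le_0_compat; [apply a_ge0 | lra]).
    rewrite cf_tail_snoc, IH by exact Hw'. simpl (1 + S n)%nat.
    rewrite cf_numer_SS, cf_denom_SS.
    pose proof (cf_denom_pos n). pose proof (cf_denom_pos (S n)).
    assert (0 < cf_denom (S n) + a (S (S n)) / (b + w) * cf_denom n) by nra.
    pose proof (a_ge0 (S (S n))).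
    field. split; nra.
Qed.

Lemma cf_tail_dist n w : 0 <= w ->
  Rabs (cf_tail a b 1 (S n) w - cf_tail a b 1 (S n) 0)
  <= cf_prod (S n) / (cf_denom (S n) * cf_denom n).
Proof.
  intros Hw. rewrite !cf_tail_moebius, !Rmult_0_l, !Rplus_0_r by lra.
  pose proof (cf_denom_pos n) as B0. pose proof (cf_denom_pos (S n)) as B1.
  pose proof (cf_prod_ge0 (S n)) as P.
  pose proof (Rmult_le_pos _ _ Hw (Rlt_le _ _ B0)) as wB0.
  replace ((cf_numer (S n) + w * cf_numer n) / (cf_denom (S n) + w * cf_denom n)
           - cf_numer (S n) / cf_denom (S n))
    with (- (w * ((-1) ^ n * cf_prod (S n))) / (cf_denom (S n) * (cf_denom (S n) + w * cf_denom n)))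
    by (rewrite <- cf_det; field; lra).
  rewrite Rabs_div, Rabs_Ropp, !Rabs_mult, <- RPow_abs, Rabs_m1, pow1 by nra.
  rewrite (Rabs_pos_eq w), (Rabs_pos_eq (cf_prod _)), !Rabs_pos_eq, Rmult_1_l by nra.
  set (B := cf_denom (S n) + w * cf_denom n).
  assert (HB : 0 < B) by (unfold B; lra).
  assert (w / B <= / cf_denom n).
  { apply Rmult_le_reg_r with (B * cf_denom n); [apply Rmult_lt_0_compat; lra|].
    replace (w / B * (B * cf_denom n)) with (w * cf_denom n) by (field; lra).
    replace (/ cf_denom n * (B * cf_denom n)) with B by (field; lra).
    unfold B. lra. }
  replace (w * cf_prod (S n) / (cf_denom (S n) * B)) with (cf_prod (S n) / cf_denom (S n) * (w / B))
    by (field; lra).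
  replace (cf_prod (S n) / (cf_denom (S n) * cf_denom n))
    with (cf_prod (S n) / cf_denom (S n) * / cf_denom n) by (field; lra).
  apply Rmult_le_compat_l; [apply Rdiv_le_0_compat|]; lra.
Qed.

Lemma cf_converges_to_tail (t : nat -> R) :
  (forall k, 0 <= t k) ->
  (forall k, (1 <= k)%nat -> t k = a k / (b + t (S k))) ->
  is_lim_seq (fun n => cf_prod (S n) / (cf_denom (S n) * cf_denom n)) 0 ->
  cf_converges_to a b (t 1%nat).
Proof.
  intros t_ge0 t_tail err_lim.
  assert (dist_lim : is_lim_seq (fun n => cf_convergent a b (S n) - t 1%nat) 0).
  { apply is_lim_seq_abs_0, is_lim_seq_le_le
      with (fun _ => 0) (fun n => cf_prod (S n) / (cf_denom (S n) * cf_denom n));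
      [intros n; split; [apply Rabs_pos|] | apply is_lim_seq_const | exact err_lim].
    unfold cf_convergent. rewrite cf_from_tail, (cf_tail_split t t_tail (S n) 1), Rabs_minus_sym by lia.
    apply cf_tail_dist, t_ge0. }
  apply is_lim_seq_incr_1.
  apply (is_lim_seq_ext (fun n => t 1%nat + (cf_convergent a b (S n) - t 1%nat))); [intros; ring|].
  pose proof (is_lim_seq_plus' _ _ _ _ (is_lim_seq_const (t 1%nat)) dist_lim) as H.
  rewrite Rplus_0_r in H. exact H.
Qed.

End ContinuedFraction.

Lemma ln_succ_le (y : R) : 0 < y -> ln (y + 1) - ln y <= 1 / y.
Proof.
  intros Hy.
  replace (ln (y + 1) - ln y) with (ln ((y + 1) / y))
    by (rewrite ln_div; lra).
  pose proof (exp_ineq1_le (ln ((y + 1) / y))) as E.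
  rewrite exp_ln in E by (apply Rdiv_lt_0_compat; lra).
  replace (1 / y) with ((y + 1) / y - 1) by (field; lra). lra.
Qed.

Definition sq_numer (r : R) (n : nat) : R := INR n ^ 2 * r ^ 2.

Section SquareNumerators.
Variables (r x : R).
Hypothesis r_pos : 0 < r.
Hypothesis x_pos : 0 < x.
Let a := sq_numer r.
Let B := cf_denom a x.
Let P := cf_prod a.

Lemma sq_numer_ge0 n : 0 <= a n.
Proof. unfold a, sq_numer. apply Rmult_le_pos; apply pow2_ge_0. Qed.

Lemma sq_numer_pos n : (1 <= n)%nat -> 0 < a n.
Proof.
  intros Hn. apply le_INR in Hn. unfold a, sq_numer. simpl in *. apply Rmult_lt_0_compat; nra.
Qed.

Lemma sq_prod_pos n : 0 < P n.
Proof. induction n; simpl; [lra | apply Rmult_lt_0_compat; [apply sq_numer_pos; lia | auto]]. Qed.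

Lemma sq_denom_pos n : 0 < B n.
Proof. apply cf_denom_pos; [exact x_pos | exact sq_numer_ge0]. Qed.

Let g := Rmin 1 (x ^ 2 / (2 * r ^ 2)).

Lemma sq_denom_const_pos : 0 < g.
Proof. apply Rmin_glb_lt; [lra | apply Rdiv_lt_0_compat; nra]. Qed.

Lemma sq_denom_lb n : g * (INR n + 1) * P n <= B n ^ 2.
Proof.
  pose proof sq_denom_const_pos as g_pos.
  enough (H : g * (INR n + 1) * P n <= B n ^ 2 /\ g * (INR (S n) + 1) * P (S n) <= B (S n) ^ 2)
    by apply H.
  induction n as [|n [IH1 IH2]].
  - unfold B, P, a, sq_numer. simpl. split.
    + pose proof (Rmin_l 1 (x ^ 2 / (2 * r ^ 2))). fold g in H. lra.
    + assert (Hg : g * (2 * r ^ 2) <= x ^ 2).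
      { apply Rmult_le_reg_r with (/ (2 * r ^ 2)); [apply Rinv_0_lt_compat; nra|].
        rewrite Rmult_assoc, Rinv_r by nra. rewrite Rmult_1_r. apply Rmin_r. }
      simpl in Hg. nra.
  - split; [exact IH2|].
    (* [B_{n+2} >= a_{n+2} B_n] and [(n+2)^2 >= (n+1)(n+3)] *)
    pose proof (sq_denom_pos n). pose proof (sq_denom_pos (S n)).
    pose proof (sq_numer_pos (S (S n)) ltac:(lia)). pose proof (sq_prod_pos n). pose proof (pos_INR n).
    assert (HB : a (S (S n)) * B n <= B (S (S n)))
      by (unfold B; rewrite cf_denom_SS; fold B; nra).
    assert (HB2 : (a (S (S n)) * B n) ^ 2 <= B (S (S n)) ^ 2) by (apply pow_incr; nra).
    change (P (S (S n))) with (a (S (S n)) * (a (S n) * P n)) in *.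
    change (P (S n)) with (a (S n) * P n) in IH2.
    assert (E : a (S (S n)) ^ 2 * (g * (INR n + 1) * P n)
                - g * (INR (S (S n)) + 1) * (a (S (S n)) * (a (S n) * P n))
                = g * P n * (INR n + 2) ^ 2 * r ^ 4 * (INR n + 1))
      by (unfold a, sq_numer; rewrite !S_INR; ring).
    assert (0 <= g * P n * (INR n + 2) ^ 2 * r ^ 4 * (INR n + 1))
      by (repeat apply Rmult_le_pos; try lra; apply pow_le; lra).
    assert (a (S (S n)) ^ 2 * (g * (INR n + 1) * P n) <= (a (S (S n)) * B n) ^ 2)
      by (rewrite Rpow_mult_distr; apply Rmult_le_compat_l; [apply pow_le|]; lra).
    lra.
Qed.

Let Q n := B (S n) * B n / P (S n).

Lemma sq_Q_succ n : Q (S n) = x * B (S n) ^ 2 / P (S (S n)) + Q n.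
Proof.
  unfold Q, B at 1. rewrite cf_denom_SS. fold B.
  change (P (S (S n))) with (a (S (S n)) * P (S n)).
  pose proof (sq_prod_pos (S n)). pose proof (sq_numer_pos (S (S n)) ltac:(lia)).
  field. lra.
Qed.

(* The increments of [Q] dominate a harmonic series. *)
Lemma sq_Q_lb n : x * g / r ^ 2 * (ln (INR n + 2) - ln 2) <= Q n.
Proof.
  pose proof sq_denom_const_pos as g_pos.
  set (d := x * g / r ^ 2).
  assert (d_pos : 0 < d) by (apply Rdiv_lt_0_compat; nra).
  induction n as [|n IH].
  - rewrite Rplus_0_l, Rminus_diag, Rmult_0_r.
    unfold Q. pose proof (sq_denom_pos 0). pose proof (sq_denom_pos 1). pose proof (sq_prod_pos 1).
    apply Rdiv_le_0_compat; nra.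
  - assert (Hinc : d / (INR n + 2) <= x * B (S n) ^ 2 / P (S (S n))).
    { pose proof (sq_denom_lb (S n)) as Hlb.
      change (P (S (S n))) with (a (S (S n)) * P (S n)).
      pose proof (sq_prod_pos (S n)). pose proof (sq_numer_pos (S (S n)) ltac:(lia)). pose proof (pos_INR n).
      replace (d / (INR n + 2))
        with (x * (g * (INR (S n) + 1) * P (S n)) / (a (S (S n)) * P (S n)))
        by (unfold d, a, sq_numer; rewrite !S_INR; field; repeat split; lra).
      apply Rmult_le_compat_r; [left; apply Rinv_0_lt_compat; nra|].
      apply Rmult_le_compat_l; lra. }
    pose proof (ln_succ_le (INR n + 2) ltac:(pose proof (pos_INR n); lra)) as Hln.
    rewrite sq_Q_succ, S_INR. replace (INR n + 1 + 2) with (INR n + 2 + 1) by ring.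
    assert (d * (ln (INR n + 2 + 1) - ln (INR n + 2)) <= d / (INR n + 2))
      by (unfold Rdiv; rewrite <- (Rmult_1_l (/ (INR n + 2))); apply Rmult_le_compat_l; lra).
    lra.
Qed.

Lemma sq_cf_error_lim : is_lim_seq (fun n => P (S n) / (B (S n) * B n)) 0.
Proof.
  pose proof sq_denom_const_pos as g_pos.
  assert (ln_lim : is_lim_seq (fun n => ln (INR n + 2)) p_infty).
  { apply (is_lim_comp_seq ln _ p_infty); [exact is_lim_ln_p | now exists 0%nat |].
    eapply is_lim_seq_plus; [exact is_lim_seq_INR | apply is_lim_seq_const | reflexivity]. }
  assert (Q_lim : is_lim_seq Q p_infty).
  { apply is_lim_seq_le_p_loc with (fun n => x * g / r ^ 2 * (ln (INR n + 2) - ln 2)).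
    - exists 0%nat. intros n _. apply sq_Q_lb.
    - apply (is_lim_seq_ext (fun n => x * g / r ^ 2 * ln (INR n + 2) + - (x * g / r ^ 2 * ln 2)));
        [intros; ring|].
      apply is_lim_seq_plus with p_infty (- (x * g / r ^ 2 * ln 2)); [| apply is_lim_seq_const | reflexivity].
      eapply is_lim_seq_mult; [apply is_lim_seq_const | exact ln_lim |].
      apply is_Rbar_mult_sym, is_Rbar_mult_p_infty_pos. simpl. apply Rdiv_lt_0_compat; nra. }
  apply (is_lim_seq_ext (fun n => / Q n)).
  - intros n. unfold Q. pose proof (sq_denom_pos n). pose proof (sq_denom_pos (S n)).
    pose proof (sq_prod_pos (S n)). field. repeat split; lra.
  - apply (is_lim_seq_inv _ _ Q_lim). discriminate.
Qed.

End SquareNumerators.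

Lemma is_RInt_exp_neg (c T : R) : 0 < c ->
  is_RInt (fun t => exp (- (c * t))) 0 T ((1 - exp (- (c * T))) / c).
Proof.
  intros Hc.
  replace ((1 - exp (- (c * T))) / c)
    with (minus (- exp (- (c * T)) / c) (- exp (- (c * 0)) / c))
    by (unfold minus, plus, opp; simpl; rewrite Rmult_0_r, Ropp_0, exp_0; field; lra).
  apply (is_RInt_derive (fun t => - exp (- (c * t)) / c)).
  - intros t _. auto_derive; [exact I | field; lra].
  - intros t _. apply (ex_derive_continuous (K := R_AbsRing) (V := R_NormedModule)).
    auto_derive. exact I.
Qed.

Lemma exp_neg_INR_lim (c : R) : 0 < c -> is_lim_seq (fun n => exp (- (c * INR n))) 0.
Proof.
  intros Hc. apply (is_lim_seq_ext (fun n => exp (- c) ^ n)).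
  - intros n. induction n as [|n IH]; [simpl; rewrite Rmult_0_r, Ropp_0, exp_0; reflexivity|].
    rewrite S_INR, <- tech_pow_Rmult, IH, <- exp_plus. f_equal. ring.
  - apply is_lim_seq_geom. rewrite Rabs_pos_eq by (left; apply exp_pos).
    rewrite <- exp_0. apply exp_increasing. lra.
Qed.

(* [int_0^oo f] along the integers; a junk value unless the partial integrals converge. *)
Definition improper_RInt (f : R -> R) : R := real (Lim_seq (fun n => RInt f 0 (INR n))).

Section ImproperIntegral.
Variables (f : R -> R) (x : R).
Hypothesis x_pos : 0 < x.
Hypothesis f_cont : forall t, continuous f t.
Hypothesis f_bound : forall t, 0 <= t -> 0 <= f t <= exp (- (x * t)).

Lemma ex_RInt_cont a b : ex_RInt f a b.
Proof. apply (ex_RInt_continuous (V := R_CompleteNormedModule)). intros; apply f_cont. Qed.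

Lemma RInt_0_INR_incr n : RInt f 0 (INR n) <= RInt f 0 (INR (S n)).
Proof.
  rewrite <- (RInt_Chasles (V := R_CompleteNormedModule) f 0 (INR n) (INR (S n)))
    by apply ex_RInt_cont.
  change (plus ?u ?v) with (u + v).
  assert (0 <= RInt f (INR n) (INR (S n))); [|lra].
  apply RInt_ge_0; [rewrite S_INR; lra | apply ex_RInt_cont |].
  intros t [Ht _]. apply f_bound. pose proof (pos_INR n). lra.
Qed.

Lemma RInt_0_le_inv T : 0 <= T -> RInt f 0 T <= 1 / x.
Proof.
  intros HT.
  apply Rle_trans with (RInt (fun t => exp (- (x * t))) 0 T).
  - apply RInt_le; [exact HT | apply ex_RInt_cont | eexists; apply is_RInt_exp_neg, x_pos |].
    intros t [Ht _]. apply f_bound. lra.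
  - rewrite (is_RInt_unique _ _ _ _ (is_RInt_exp_neg x T x_pos)).
    pose proof (exp_pos (- (x * T))).
    apply Rmult_le_compat_r; [left; apply Rinv_0_lt_compat|]; lra.
Qed.

Lemma improper_RInt_lim : is_lim_seq (fun n => RInt f 0 (INR n)) (improper_RInt f).
Proof.
  apply Lim_seq_correct', ex_finite_lim_seq_incr with (1 / x).
  - exact RInt_0_INR_incr.
  - intros n. apply RInt_0_le_inv, pos_INR.
Qed.

Lemma improper_RInt_le : improper_RInt f <= 1 / x.
Proof.
  apply (is_lim_seq_le _ _ (improper_RInt f) (1 / x)
           (fun n => RInt_0_le_inv (INR n) (pos_INR n)) improper_RInt_lim).
  apply is_lim_seq_const.
Qed.

Lemma RInt_le_improper n : RInt f 0 (INR n) <= improper_RInt f.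
Proof. exact (is_lim_seq_incr_compare _ _ improper_RInt_lim RInt_0_INR_incr n). Qed.

End ImproperIntegral.

Lemma cosh_pos (y : R) : 0 < cosh y.
Proof. unfold cosh. pose proof (exp_pos y). pose proof (exp_pos (- y)). lra. Qed.

Lemma tanh_bounds (y : R) : 0 <= y -> 0 <= tanh y <= 1.
Proof.
  intros Hy. unfold tanh, sinh, cosh.
  pose proof (exp_pos y). pose proof (exp_pos (- y)).
  assert (exp (- y) <= exp y).
  { destruct Hy as [Hy | <-]; [left; apply exp_increasing; lra | rewrite Ropp_0; lra]. }
  split; [apply Rdiv_le_0_compat | apply Rle_div_l]; lra.
Qed.

Lemma tanh_pos (y : R) : 0 < y -> 0 < tanh y.
Proof.
  intros Hy. unfold tanh, sinh, cosh.
  pose proof (exp_pos y). pose proof (exp_pos (- y)).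
  assert (exp (- y) < exp y) by (apply exp_increasing; lra).
  apply Rdiv_lt_0_compat; lra.
Qed.

Lemma is_derive_tanh_scal (r t : R) :
  is_derive (fun t => tanh (r * t)) t (r * (1 - tanh (r * t) ^ 2)).
Proof.
  pose proof (cosh_pos (r * t)) as C. unfold tanh, sinh, cosh in *.
  auto_derive; [lra | field; lra].
Qed.

Lemma is_derive_inv_cosh_scal (r t : R) :
  is_derive (fun t => / cosh (r * t)) t (- r * tanh (r * t) / cosh (r * t)).
Proof.
  pose proof (cosh_pos (r * t)) as C. unfold tanh, sinh, cosh in *.
  auto_derive; [lra | field; lra].
Qed.

Definition sech_kernel (x r : R) (k : nat) (t : R) : R :=
  exp (- (x * t)) * tanh (r * t) ^ k / cosh (r * t).

Lemma sech_kernel_at_0 x r k : sech_kernel x r k 0 = if k then 1 else 0.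
Proof.
  unfold sech_kernel, tanh, sinh, cosh. rewrite !Rmult_0_r, !Ropp_0, !exp_0.
  destruct k; simpl; field.
Qed.

Lemma is_derive_sech_kernel x r k t :
  is_derive (sech_kernel x r k) t
    (- x * sech_kernel x r k t + r * INR k * sech_kernel x r (pred k) t
     - r * (INR k + 1) * sech_kernel x r (S k) t).
Proof.
  assert (He : is_derive (fun t => exp (- (x * t))) t (- x * exp (- (x * t))))
    by (auto_derive; [exact I | ring]).
  pose proof (is_derive_mult _ _ t _ _
    (is_derive_mult _ _ t _ _ He (is_derive_pow _ k _ _ (is_derive_tanh_scal r t)) Rmult_comm)
    (is_derive_inv_cosh_scal r t) Rmult_comm) as H.
  match type of H with is_derive _ _ ?l => replace (- x * _ + _ - _) with l; [exact H|] end.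
  unfold sech_kernel, plus, mult; simpl. pose proof (cosh_pos (r * t)).
  destruct k as [|k]; simpl; field; lra.
Qed.

Definition sech_laplace (x r : R) (k : nat) : R := improper_RInt (sech_kernel x r k).

Section SechLaplace.
Variables (x r : R).
Hypothesis x_pos : 0 < x.
Hypothesis r_pos : 0 < r.

Lemma sech_kernel_continuous k t : continuous (sech_kernel x r k) t.
Proof.
  apply (ex_derive_continuous (K := R_AbsRing) (V := R_NormedModule)).
  eexists. apply is_derive_sech_kernel.
Qed.

Lemma sech_kernel_bound k t : 0 <= t -> 0 <= sech_kernel x r k t <= exp (- (x * t)).
Proof.
  intros Ht. unfold sech_kernel.
  pose proof (exp_pos (- (x * t))) as E.
  pose proof (tanh_bounds (r * t) ltac:(nra)) as [T0 T1].
  assert (Hk : 0 <= tanh (r * t) ^ k <= 1)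
    by (split; [apply pow_le | rewrite <- (pow1 k); apply pow_incr]; lra).
  assert (C : 0 < / cosh (r * t) <= 1).
  { split; [apply Rinv_0_lt_compat, cosh_pos|].
    rewrite <- Rinv_1. apply Rinv_le_contravar; [lra|].
    unfold cosh. pose proof (exp_ineq1_le (r * t)). pose proof (exp_ineq1_le (- (r * t))). lra. }
  unfold Rdiv. split; [apply Rmult_le_pos; [apply Rmult_le_pos|]; lra|].
  rewrite <- (Rmult_1_r (exp _)) at 2. rewrite Rmult_assoc.
  apply Rmult_le_compat_l; [lra|]. rewrite <- (Rmult_1_r 1). apply Rmult_le_compat; lra.
Qed.

Lemma sech_kernel_pos k t : 0 < t -> 0 < sech_kernel x r k t.
Proof.
  intros Ht. unfold sech_kernel.
  apply Rdiv_lt_0_compat; [apply Rmult_lt_0_compat; [apply exp_pos|] | apply cosh_pos].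
  apply pow_lt, tanh_pos. nra.
Qed.

Lemma sech_laplace_lim k :
  is_lim_seq (fun n => RInt (sech_kernel x r k) 0 (INR n)) (sech_laplace x r k).
Proof. apply (improper_RInt_lim _ x); [exact x_pos | apply sech_kernel_continuous | apply sech_kernel_bound]. Qed.

Lemma sech_laplace_pos k : 0 < sech_laplace x r k.
Proof.
  apply Rlt_le_trans with (RInt (sech_kernel x r k) 0 (INR 1)).
  - apply RInt_gt_0; [simpl; lra | intros; apply sech_kernel_pos; lra |].
    intros; apply sech_kernel_continuous.
  - apply (RInt_le_improper _ x); [exact x_pos | apply sech_kernel_continuous | apply sech_kernel_bound].
Qed.

Lemma sech_laplace_le k : sech_laplace x r k <= 1 / x.
Proof. apply improper_RInt_le; [exact x_pos | apply sech_kernel_continuous | apply sech_kernel_bound]. Qed.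

Lemma RInt_sech_kernel_rec k T :
  x * RInt (sech_kernel x r k) 0 T + r * (INR k + 1) * RInt (sech_kernel x r (S k)) 0 T
  - r * INR k * RInt (sech_kernel x r (pred k)) 0 T
  = sech_kernel x r k 0 - sech_kernel x r k T.
Proof.
  assert (I : forall j, is_RInt (sech_kernel x r j) 0 T (RInt (sech_kernel x r j) 0 T)).
  { intros j. apply (RInt_correct (V := R_CompleteNormedModule)).
    apply (ex_RInt_continuous (V := R_CompleteNormedModule)). intros; apply sech_kernel_continuous. }
  pose proof (is_RInt_derive (sech_kernel x r k) _ 0 T
    (fun t _ => is_derive_sech_kernel x r k t)) as FTC.
  assert (Lin : is_RInt (fun t => - x * sech_kernel x r k t + r * INR k * sech_kernel x r (pred k) t
                                  - r * (INR k + 1) * sech_kernel x r (S k) t) 0 T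
     (- x * RInt (sech_kernel x r k) 0 T + r * INR k * RInt (sech_kernel x r (pred k)) 0 T
      - r * (INR k + 1) * RInt (sech_kernel x r (S k)) 0 T)).
  { apply (is_RInt_minus (V := R_NormedModule)); [apply (is_RInt_plus (V := R_NormedModule))|];
      apply (is_RInt_scal (V := R_NormedModule)), I. }
  assert (Hcont : forall t, continuous (fun t => - x * sech_kernel x r k t
      + r * INR k * sech_kernel x r (pred k) t - r * (INR k + 1) * sech_kernel x r (S k) t) t).
  { intros t. apply (ex_derive_continuous (K := R_AbsRing) (V := R_NormedModule)).
    auto_derive. repeat split; eexists; apply is_derive_sech_kernel. }
  pose proof (is_RInt_unique _ _ _ _ Lin) as E.
  rewrite (is_RInt_unique _ _ _ _ (FTC (fun t _ => Hcont t))) in E.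
  unfold minus, plus, opp in E; simpl in E. lra.
Qed.
Lemma sech_laplace_rec k :
  x * sech_laplace x r k + r * (INR k + 1) * sech_laplace x r (S k)
  - r * INR k * sech_laplace x r (pred k) = sech_kernel x r k 0.
Proof.
  set (comb := fun n => x * RInt (sech_kernel x r k) 0 (INR n)
    + r * (INR k + 1) * RInt (sech_kernel x r (S k)) 0 (INR n)
    - r * INR k * RInt (sech_kernel x r (pred k)) 0 (INR n)).
  assert (L1 : is_lim_seq comb (x * sech_laplace x r k + r * (INR k + 1) * sech_laplace x r (S k)
                                - r * INR k * sech_laplace x r (pred k))).
  { unfold comb. apply is_lim_seq_minus'; [apply is_lim_seq_plus'|];
      apply is_lim_seq_mult'; solve [apply is_lim_seq_const | apply sech_laplace_lim]. }
  assert (L2 : is_lim_seq comb (sech_kernel x r k 0)).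
  { apply (is_lim_seq_ext (fun n => sech_kernel x r k 0 - sech_kernel x r k (INR n))).
    - intros n. unfold comb. rewrite RInt_sech_kernel_rec. reflexivity.
    - assert (vanish : is_lim_seq (fun n => sech_kernel x r k (INR n)) 0).
      { apply is_lim_seq_le_le with (fun _ => 0) (fun n => exp (- (x * INR n)));
          [intros n; apply sech_kernel_bound, pos_INR | apply is_lim_seq_const | apply exp_neg_INR_lim, x_pos]. }
      pose proof (is_lim_seq_minus' _ _ _ _ (is_lim_seq_const (sech_kernel x r k 0)) vanish) as H.
      rewrite Rminus_0_r in H. exact H. }
  apply is_lim_seq_unique in L1, L2. rewrite L1 in L2. now injection L2.
Qed.

End SechLaplace.

Lemma sech_kernel_shift_sum x r t :
  sech_kernel x r 0 t + sech_kernel (x + 2 * r) r 0 t = 2 * exp (- ((x + r) * t)).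
Proof.
  unfold sech_kernel, cosh. simpl.
  replace (exp (- ((x + 2 * r) * t))) with (exp (- ((x + r) * t)) * exp (- (r * t)))
    by (rewrite <- exp_plus; f_equal; ring).
  replace (exp (- (x * t))) with (exp (- ((x + r) * t)) * exp (r * t))
    by (rewrite <- exp_plus; f_equal; ring).
  pose proof (exp_pos (r * t)). pose proof (exp_pos (- (r * t))). field. lra.
Qed.

Lemma sech_laplace_shift x r : 0 < x -> 0 < r ->
  sech_laplace x r 0 + sech_laplace (x + 2 * r) r 0 = 2 / (x + r).
Proof.
  intros Hx Hr.
  assert (L1 := is_lim_seq_plus' _ _ _ _ (sech_laplace_lim x r Hx Hr 0)
                  (sech_laplace_lim (x + 2 * r) r ltac:(lra) Hr 0)).
  assert (L2 : is_lim_seq (fun n => RInt (sech_kernel x r 0) 0 (INR n)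
                                    + RInt (sech_kernel (x + 2 * r) r 0) 0 (INR n)) (2 / (x + r))).
  { apply (is_lim_seq_ext (fun n => 2 * ((1 - exp (- ((x + r) * INR n))) / (x + r)))).
    - intros n.
      rewrite <- (RInt_plus (V := R_CompleteNormedModule));
        [| apply (ex_RInt_continuous (V := R_CompleteNormedModule)); intros;
           apply sech_kernel_continuous; lra ..].
      rewrite (RInt_ext _ (fun t => 2 * exp (- ((x + r) * t))))
        by (intros; apply sech_kernel_shift_sum).
      rewrite <- (is_RInt_unique _ _ _ _ (is_RInt_exp_neg (x + r) (INR n) ltac:(lra))).
      symmetry. apply (RInt_scal (V := R_CompleteNormedModule)).
      eexists. apply is_RInt_exp_neg. lra.
    - replace (2 / (x + r)) with (2 * ((1 - 0) / (x + r))) by (field; lra).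
      apply is_lim_seq_mult'; [apply is_lim_seq_const|].
      apply is_lim_seq_mult'; [|apply is_lim_seq_const].
      apply is_lim_seq_minus'; [apply is_lim_seq_const | apply exp_neg_INR_lim; lra]. }
  apply is_lim_seq_unique in L1, L2. rewrite L1 in L2. now injection L2.
Qed.


(* The ratios [t_k = r k J_k / J_(k-1)] of the Laplace transforms form a positive
   tail sequence of the continued fraction, by the recurrence of [sech_laplace_rec]. *)
Lemma sech_laplace_cf x r : 0 < x -> 0 < r ->
  cf_converges_to (sq_numer r) x (1 / sech_laplace x r 0 - x).
Proof.
  intros Hx Hr.
  set (J := sech_laplace x r).
  assert (J_pos : forall k, 0 < J k) by (intros; apply sech_laplace_pos; lra).
  set (t := fun k => r * INR k * J k / J (pred k)).
  replace (1 / J 0%nat - x) with (t 1%nat).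
  2: { pose proof (sech_laplace_rec x r Hx Hr 0) as E. rewrite sech_kernel_at_0 in E.
       fold J in E. change (INR 0) with 0 in E.
       pose proof (J_pos 0%nat). unfold t. simpl pred. change (INR 1) with 1.
       replace (r * 1 * J 1%nat) with (1 - x * J 0%nat) by lra. field. lra. }
  apply cf_converges_to_tail; [exact Hx | exact (sq_numer_ge0 r) | | | exact (sq_cf_error_lim r x Hr Hx)].
  - intros k. unfold t. pose proof (J_pos k). pose proof (J_pos (pred k)). pose proof (pos_INR k).
    apply Rdiv_le_0_compat; [apply Rmult_le_pos; [apply Rmult_le_pos|]|]; lra.
  - intros [|j] Hj; [lia|].
    pose proof (sech_laplace_rec x r Hx Hr (S j)) as E. rewrite sech_kernel_at_0 in E.
    fold J in E. simpl pred in E.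
    pose proof (J_pos j). pose proof (J_pos (S j)). pose proof (J_pos (S (S j))). pose proof (pos_INR j).
    assert (Hsum : x + t (S (S j)) = r * INR (S j) * J j / J (S j)).
    { unfold t. simpl pred. field_simplify_eq; [rewrite !S_INR in *; lra | lra]. }
    rewrite Hsum. unfold t, sq_numer. simpl pred. rewrite S_INR. field. repeat split; lra.
Qed.

Lemma sech_laplace_vanish r c : 0 < r -> is_lim (fun s => sech_laplace (s + c) r 0) p_infty 0.
Proof.
  intros Hr.
  apply is_lim_le_le_loc with (fun _ => 0) (fun s => / (s + c)).
  - exists (- c). intros s Hs. split.
    + apply Rlt_le, sech_laplace_pos; lra.
    + rewrite <- (Rmult_1_l (/ _)). apply sech_laplace_le; lra.
  - apply is_lim_const.
  - replace (Finite 0) with (Rbar_inv p_infty) by reflexivity.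
    apply is_lim_inv; [|discriminate].
    eapply is_lim_plus; [apply is_lim_id | apply is_lim_const | reflexivity].
Qed.

Lemma antiperiodic_lim_0 (h : R -> R) (p s0 : R) : 0 < p ->
  (forall s, s > s0 -> h (s + p) = - h s) -> is_lim h p_infty 0 ->
  forall s, s > s0 -> h s = 0.
Proof.
  intros Hp Hanti Hlim s Hs.
  assert (Hper : forall n, Rabs (h (s + p * INR n)) = Rabs (h s)).
  { induction n as [|n IH]; [simpl; rewrite Rmult_0_r, Rplus_0_r; reflexivity|].
    rewrite S_INR. replace (s + p * (INR n + 1)) with (s + p * INR n + p) by ring.
    pose proof (pos_INR n). rewrite Hanti, Rabs_Ropp by nra. exact IH. }
  assert (Hseq : is_lim_seq (fun n => Rabs (h (s + p * INR n))) 0).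
  { apply -> is_lim_seq_abs_0. apply (is_lim_comp_seq h _ p_infty); [exact Hlim | now exists 0%nat |].
    apply is_lim_seq_plus with s p_infty; [apply is_lim_seq_const | | reflexivity].
    eapply is_lim_seq_mult; [apply is_lim_seq_const | apply is_lim_seq_INR |].
    apply is_Rbar_mult_sym, is_Rbar_mult_p_infty_pos. exact Hp. }
  apply (is_lim_seq_ext _ _ _ Hper), is_lim_seq_unique in Hseq.
  rewrite Lim_seq_const in Hseq. injection Hseq as E. now apply Rabs_eq_0.
Qed.

Theorem theorem8 (psi : R -> R) (r : R) (hr : 0 < r) :
  let phi := fun s => s + psi r in
  exists K : R -> R,
    (forall s, s > - psi r ->
       cf_converges_to (fun n => (INR n) ^ 2 * r ^ 2) (phi s) (K s)) /\
    let f := fun s => 1 / (2 * phi s + 2 * K s) in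
    (forall s, s > - psi r -> f s + f (s + 2 * r) = 1 / (phi s + r)) /\
    is_lim f p_infty 0 /\
    (forall g : R -> R,
       (forall s, s > - psi r -> g s + g (s + 2 * r) = 1 / (phi s + r)) ->
       is_lim g p_infty 0 ->
       forall s, s > - psi r -> g s = f s).
Proof.
  intros phi.
  exists (fun s => 1 / sech_laplace (phi s) r 0 - phi s).
  split; [intros s Hs; apply sech_laplace_cf; unfold phi; lra|].
  intros f.
  assert (Hf : forall s, s > - psi r -> f s = / 2 * sech_laplace (phi s) r 0).
  { intros s Hs. pose proof (sech_laplace_pos (phi s) r ltac:(unfold phi; lra) hr 0).
    unfold f. field. lra. }
  assert (Hfeq : forall s, s > - psi r -> f s + f (s + 2 * r) = 1 / (phi s + r)).
  { intros s Hs. rewrite !Hf by lra.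
    replace (phi (s + 2 * r)) with (phi s + 2 * r) by (unfold phi; ring).
    rewrite <- Rmult_plus_distr_l, sech_laplace_shift by (unfold phi; lra).
    field. unfold phi; lra. }
  assert (Hflim : is_lim f p_infty 0).
  { apply is_lim_ext_loc with (fun s => / 2 * sech_laplace (phi s) r 0).
    - exists (- psi r). intros s Hs. symmetry. apply Hf. lra.
    - replace (Finite 0) with (Rbar_mult (/ 2) 0) by (simpl; f_equal; ring).
      apply is_lim_scal_l, sech_laplace_vanish, hr. }
  split; [exact Hfeq | split; [exact Hflim |]].
  intros g Hg Hglim s Hs.
  enough (g s - f s = 0) by lra.
  apply (antiperiodic_lim_0 (fun s => g s - f s) (2 * r) (- psi r)); [lra | | | exact Hs].
  - intros u Hu. pose proof (Hg u Hu). pose proof (Hfeq u Hu). lra.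
  - replace (Finite 0) with (Rbar_minus 0 0) by (simpl; f_equal; ring).
    apply (is_lim_minus _ _ _ 0 0); [exact Hglim | exact Hflim | reflexivity].
Qed.
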